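(* In the imprimitive setting described in the context, suppose $K_0\ne1$ and $K_v\cong D_{2m}$ where $m=n$ or $2m=n$. Then $K\cong\mathbb{Z}_p^2\rtimes\mathbb{Z}_2$ or $K\cong\mathbb{Z}_p^2\rtimes D_4$, where $D_4\cong\mathbb{Z}_2\times\mathbb{Z}_2$.
   Context: Setting: $p\ge3$ is a prime, $G$ is a transitive permutation group of degree $p^2$ on a set $\Omega$ with point stabilizers $G_v\cong D_{2n}$ (dihedral of order $2n$, $n\ge2$), and $G$ is imprimitive; $\mathcal{B}$ is a nontrivial complete block system of $G$ (blocks of size $p$), $K$ is the kernel of the action of $G$ on $\mathcal{B}$, $B\in\mathcal{B}$ is a block, $v\in B$, $K_v$ is the stabilizer of $v$ in $K$, and $K_0$ is the kernel of the action of $K$ on $B$. $D_{2m}$ is dihedral of order $2m$. *)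

From mathcomp Require Import all_boot all_fingroup all_solvable.
From mathcomp Require Import zmodp.
Set Implicit Arguments. Unset Strict Implicit. Unset Printing Implicit Defensive.
Local Open Scope group_scope.

(* Abstract dihedral group of order 2k, given by its standard presentation
   <x, y | x^k = y^2 = 1, x^y = x^-1>.  For k = 1 this is Z_2, for k = 2 it is
   the Klein four group Z_2 x Z_2. *)
Definition dihedral_of_order (gT : finGroupType) (G : {set gT}) (k : nat) : Prop :=
  G \isog Grp (x : y : x ^+ k, y ^+ 2, x ^ y = x^-1).

Definition block_system (T : finType) (G : {set {perm T}}) (P : {set {set T}}) : Prop :=
  partition P [set: T] /\ [acts G, on P | 'P^*].

From mathcomp Require Import all_boot all_fingroup all_solvable.
From mathcomp Require Import zmodp.

(* K is normal in the stabiliser G_B, which is transitive on the block B, so the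
   K-orbits in B all have length 1 or p; as K_0 <> 1, K is transitive on every
   block and |K| = p |K_v|.  The odd-order elements of the dihedral group K_v
   are rotations, so K_v has a unique subgroup <a> of order p; it lies in K_0,
   is normal in K, and K_v has no element of order p^2, so Schur-Zassenhaus
   gives a complement H of <a> in K_v.  Conjugating <a> to a point moved by a
   yields a second normal subgroup Q of order p, and S = <a> x Q = Z_p^2 is
   normal in K with K = S x| H.  H acts faithfully on S and normalises the
   cyclic groups <a> and Q, hence is abelian; an abelian subgroup of a dihedral
   group containing a reflection is elementary abelian of order at most 4. *)

Set Implicit Arguments.
Unset Strict Implicit.
Unset Printing Implicit Defensive.

Local Open Scope group_scope.

Section NormalOrbits.

Variable T : finType.
Implicit Types (Y L N G : {group {perm T}}) (x : T).

Lemma card_orbit_normal_dvd Y L x :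
  Y <| L -> #|orbit 'P Y x| %| #|orbit 'P L x|.
Proof.
case/andP=> sYL nYL; rewrite !card_orbit.
have ->: 'C_Y[x | 'P] = Y :&: 'C_L[x | 'P] by rewrite setIA (setIidPl sYL).
rewrite indexgI -indexMg -norm_joinEl; last exact: subset_trans (subsetIl _ _) nYL.
by apply: indexSg; rewrite ?joing_subl // join_subG subsetIl sYL.
Qed.

Lemma orbit_normal_prime Y L x :
  Y <| L -> prime #|orbit 'P L x| ->
  orbit 'P Y x = [set x] \/ orbit 'P Y x = orbit 'P L x.
Proof.
move=> nYL /primeP[_ prL].
have sYLx : orbit 'P Y x \subset orbit 'P L x by rewrite imsetS ?normal_sub.
case/pred2P: (prL _ (card_orbit_normal_dvd x nYL)) => oY; first by left; exact: card_orbit1.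
by right; apply/eqP; rewrite eqEcard sYLx oY leqnn.
Qed.

Lemma sub_astab1_all_trivial N :
  (forall x, N \subset 'C[x | 'P]) -> N :=: 1.
Proof.
move=> sNx; apply/trivgP; apply: subset_trans (perm_faithful N).
rewrite subsetI subxx; apply/subsetP=> k kN; apply/astabP=> z _.
exact/astab1P/(subsetP (sNx z)).
Qed.

(* In a transitive group the point stabilisers are all conjugate, so a normal
   subgroup fixing one point fixes them all. *)
Lemma normal_sub_astab1_trivial G N x :
  [transitive G, on [set: T] | 'P] -> N <| G -> N \subset 'C[x | 'P] -> N :=: 1.
Proof.
move=> trG /andP[_ nNG] sNx; apply: sub_astab1_all_trivial => z.
have [g gG ->] := atransP2 trG (in_setT x) (in_setT z).
by rewrite astab1_act -(normsP nNG g gG) conjSg.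
Qed.

End NormalOrbits.

Section Dihedral.

Variables (gT : finGroupType) (V : {group gT}) (x y : gT).
Hypotheses (defV : <[x]> <*> <[y]> = V) (y2 : y ^+ 2 = 1) (xy : x ^ y = x^-1).

Lemma dihedral_cycle_norm : y \in 'N(<[x]>).
Proof. by apply/normP; rewrite -cycleJ xy cycleV. Qed.

Lemma dihedral_reflection z :
  z \in V -> z \notin <[x]> -> exists2 r, r \in <[x]> & z = r * y.
Proof.
move: dihedral_cycle_norm; rewrite -cycle_subG => nxy.
rewrite -defV norm_joinEr // => /mulsgP[r t rx /cycleP[i ->] ->] zx.
exists r => //; move: zx; rewrite -(expg_mod _ y2).
have : i %% 2 < 2 by rewrite ltn_mod.
case: (i %% 2) => [|[|//]] _; last by rewrite expg1.
by rewrite expg0 mulg1 rx.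
Qed.

Lemma dihedral_reflection_conj r0 r :
  r0 \in <[x]> -> r \in <[x]> -> r ^ (r0 * y) = r^-1.
Proof.
move=> r0x /cycleP[i ->]; rewrite conjgM.
have -> : x ^+ i ^ r0 = x ^+ i.
  by apply/conjg_fixP/commgP/(centsP (cycle_abelian x)); rewrite ?mem_cycle.
by rewrite conjXg xy expgVn.
Qed.

Lemma dihedral_reflection_sq r0 : r0 \in <[x]> -> (r0 * y) ^+ 2 = 1.
Proof.
move=> r0x; have yV : y^-1 = y by apply/eqP; rewrite eq_invg_mul -expg2 y2.
have := dihedral_reflection_conj (group1 _) r0x.
by rewrite mul1g conjgE yV expg2 -mulgA => ->; rewrite mulgV.
Qed.

Lemma dihedral_odd_order u : u \in V -> odd #[u] -> u \in <[x]>.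
Proof.
move=> uV ou; apply: contraTT ou => ux.
have [r rx uE] := dihedral_reflection uV ux.
have u1 : u != 1 by apply: contraNneq ux => ->; apply: group1.
by rewrite (nt_prime_order (isT : prime 2)) // uE dihedral_reflection_sq.
Qed.

Lemma dihedral_odd_subgroup (X : {group gT}) :
  X \subset V -> odd #|X| -> X \subset <[x]>.
Proof.
move=> sXV oX; apply/subsetP=> u uX.
by apply: dihedral_odd_order (subsetP sXV u uX) _; apply: dvdn_odd oX; rewrite order_dvdG.
Qed.

Lemma dihedral_odd_subgroup_unique (X Y : {group gT}) :
  X \subset V -> Y \subset V -> #|X| = #|Y| -> odd #|X| -> X :=: Y.
Proof.
move=> sXV sYV oXY oX; have sXx := dihedral_odd_subgroup sXV oX.
have sYx : Y \subset <[x]> by rewrite dihedral_odd_subgroup // -oXY.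
by apply/eqP; rewrite (eq_subG_cyclic (cycle_cyclic x) sXx sYx) oXY.
Qed.

Lemma dihedral_reflection_notin_cycle u :
  u \in <[x]> -> 2 < #[u] -> y \notin <[x]>.
Proof.
move=> ux ou; apply/negP=> yx.
have uy : u ^ y = u by apply/conjg_fixP/commgP/(centsP (cycle_abelian x)).
have := dihedral_reflection_conj (group1 _) ux; rewrite mul1g uy => uV.
have : #[u] %| 2 by rewrite order_dvdn expg2 {2}uV mulgV.
by move/dvdn_leq => /(_ isT); rewrite leqNgt ou.
Qed.

Lemma dihedral_abelian_exponent2 (H : {group gT}) r h :
  H \subset V -> abelian H -> r \in H -> r \notin <[x]> -> h \in H -> h ^+ 2 = 1.
Proof.
move=> sHV cHH rH rx hH; have hV := subsetP sHV h hH.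
have [r0 r0x rE] := dihedral_reflection (subsetP sHV r rH) rx.
have [hx | /(dihedral_reflection hV)[r1 r1x ->]] := boolP (h \in <[x]>).
  have hr : h ^ r = h by apply/conjg_fixP/commgP/(centsP cHH).
  have := dihedral_reflection_conj r0x hx; rewrite -rE hr => hV'.
  by rewrite expg2 {2}hV' mulgV.
exact: dihedral_reflection_sq.
Qed.

Lemma dihedral_exponent2_card (H : {group gT}) :
  H \subset V -> {in H, forall h, h ^+ 2 = 1} -> #|H| <= 4.
Proof.
move=> sHV H2.
have leV : #|V| <= #|<[x]>| * 2.
  have oy : #|<[y]>| <= 2 by rewrite -orderE dvdn_leq // order_dvdn y2.
  have := mul_cardG <[x]> <[y]>.
  rewrite -norm_joinEr ?cycle_subG ?dihedral_cycle_norm // defV => eV.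
  by apply: leq_trans (leq_mul (leqnn _) oy); rewrite eV leq_pmulr ?cardG_gt0.
have leHx : #|H :&: <[x]>| <= 2.
  have /cyclicP [t eT] := cyclicS (subsetIr H <[x]>) (cycle_cyclic x).
  have tH : t \in H by have := cycle_id t; rewrite -eT => /setIP[].
  by rewrite eT -orderE dvdn_leq // order_dvdn H2.
have leHxV : #|H * <[x]>| <= #|V| by rewrite subset_leq_card ?mul_subG // -defV joing_subl.
rewrite -(leq_pmul2r (cardG_gt0 <[x]>)) mul_cardG.
by apply: leq_trans (leq_mul (leq_trans leHxV leV) leHx) _; rewrite -mulnA mulnC.
Qed.

End Dihedral.

Section GroupFacts.

Variable gT : finGroupType.
Implicit Types X H : {group gT}.

(* The automorphism group of a cyclic group is abelian. *)
Lemma commg_cyclic_cent X h1 h2 :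
  cyclic X -> h1 \in 'N(X) -> h2 \in 'N(X) -> [~ h1, h2] \in 'C(X).
Proof.
move=> cycX nX1 nX2; rewrite -ker_conj_aut; apply/kerP; first by rewrite groupR.
have autX h : h \in 'N(X) -> conj_aut X h \in Aut X.
  by move=> nXh; apply: subsetP (Aut_conj_aut X 'N(X)) _ (mem_morphim _ nXh nXh).
rewrite morphR //; apply/eqP/commgP.
exact: (centsP (Aut_cyclic_abelian cycX)) _ (autX _ nX1) _ (autX _ nX2).
Qed.

Lemma isog_Zp_prime X q : prime q -> #|X| = q -> X \isog Zp q.
Proof.
move=> pr_q oX; rewrite isog_cyclic_card; last by rewrite prime_cyclic ?oX.
by rewrite card_Zp ?prime_gt0 // prime_cyclic ?card_Zp ?prime_gt0 ?oX ?eqxx.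
Qed.

Lemma card4_exponent2_dihedral H :
  #|H| = 4 -> {in H, forall h, h ^+ 2 = 1} -> dihedral_of_order H 2.
Proof.
move=> oH H2; have oH2 h : h \in H -> h != 1 -> #[h] = 2.
  by move=> hH; apply: nt_prime_order; rewrite ?H2.
have [r rH ntr] : exists2 r, r \in H & r != 1 by apply/trivgPn; rewrite -cardG_gt1 oH.
have [h hH hn1r] : exists2 h, h \in H & h \notin [set 1; r].
  apply/subsetPn/negP => /subset_leq_card; rewrite oH cards2.
  by case: (1 != r).
move: hn1r; rewrite !inE negb_or => /andP[nth nhr].
have nrh : r != h by rewrite eq_sym.
have sGH : <<[set r; h]>> \subset H by rewrite gen_subG subUset !sub1set rH hH.
have {}oG : #|<<[set r; h]>>| = 4.
  have : 2 < #|<<[set r; h]>>|.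
    apply: leq_trans (subset_leq_card (_ : [set 1; r; h] \subset _)).
      by rewrite -setUA cardsU1 cards2 !inE negb_or ![1 == _]eq_sym ntr nth nrh.
    apply/subsetP=> u; rewrite !inE -orbA => /or3P[]/eqP->;
      by rewrite ?group1 ?mem_gen ?inE ?eqxx ?orbT.
  have : #|<<[set r; h]>>| %| 4 by rewrite -oH cardSg.
  by case: #|_| => [|[|[|[|[|]]]]].
have eGH : <<[set r; h]>> = H by apply/eqP; rewrite eqEcard sGH oG oH.
have := involutions_gen_dihedral (oH2 r rH ntr) (oH2 h hH nth) nrh.
by rewrite eGH oH => isoD; apply: isoGrp_trans isoD (Grp_dihedral (isT : 1 < 2)).
Qed.

End GroupFacts.

Section BlockKernel.

Variables (T : finType) (G : {group {perm T}}) (P : {set {set T}}) (p : nat).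
Hypotheses (pr_p : prime p) (trG : [transitive G, on [set: T] | 'P]).
Hypotheses (sysP : block_system G P) (cardP : forall C, C \in P -> #|C| = p).

Local Notation K := 'C_G(P | 'P^*).

Lemma pblock_mem_system x : pblock P x \in P.
Proof. by case: sysP => /and3P[/eqP covP _ _] _; rewrite pblock_mem // covP inE. Qed.

Lemma mem_pblock_system x : x \in pblock P x.
Proof. by case: sysP => /and3P[/eqP covP _ _] _; rewrite mem_pblock covP inE. Qed.

Lemma block_kernel_normal : K <| G.
Proof. by case: sysP => _ actsGP; apply: normalGI actsGP (astab_normal _ _). Qed.

Lemma block_kernel_act k x : k \in K -> k x \in pblock P x.
Proof.
case/setIP=> _ /astabP/(_ _ (pblock_mem_system x)) <-.
by rewrite -apermE mem_setact ?mem_pblock_system.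
Qed.

Lemma orbit_block_kernel_sub (L : {group {perm T}}) x :
  L \subset K -> orbit 'P L x \subset pblock P x.
Proof.
move=> sLK; apply/subsetP=> _ /imsetP[k kL ->].
exact: block_kernel_act (subsetP sLK k kL).
Qed.

Lemma block_stab_orbit x : orbit 'P 'N_G(pblock P x | 'P) x = pblock P x.
Proof.
case: sysP => /and3P[_ triP _] actsGP.
apply/setP=> y; apply/imsetP/idP=> [[g /setIP[_ nxg] ->] | yx].
  by rewrite (astabs_act _ nxg) mem_pblock_system.
have [g gG yE] := atransP2 trG (in_setT x) (in_setT y); exists g => //.
rewrite inE gG -astab1_set; apply/astab1P.
have Pxg : ('P^*)%act (pblock P x) g \in P.
  by rewrite (astabs_act _ (subsetP actsGP g gG)) pblock_mem_system.
rewrite -{2}(def_pblock triP (pblock_mem_system x) yx); symmetry.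
by apply: def_pblock triP Pxg _; rewrite yE mem_setact ?mem_pblock_system.
Qed.

Lemma block_kernel_sub_block_norm C : C \in P -> K \subset 'N(C | 'P).
Proof. by move=> CP; rewrite -astab1_set (subset_trans (subsetIr _ _)) ?astabS ?sub1set. Qed.

Lemma block_kernel_normal_stab C : C \in P -> K <| 'N_G(C | 'P).
Proof.
move=> CP; have /andP[sKG nKG] := block_kernel_normal.
rewrite /normal subsetI sKG block_kernel_sub_block_norm //.
exact: subset_trans (subsetIl _ _) nKG.
Qed.

Lemma block_kernel_stab_conj x g :
  g \in G -> 'C_K[x | 'P] :^ g = 'C_K['P%act x g | 'P].
Proof.
move=> gG; have /andP[_ nKG] := block_kernel_normal.
by rewrite conjIg (normsP nKG g gG) astab1_act.
Qed.

Section NontrivialKernel.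

Hypothesis ntK : K :!=: 1.

Lemma block_kernel_orbit x : orbit 'P K x = pblock P x.
Proof.
have := orbit_normal_prime (x := x) (block_kernel_normal_stab (pblock_mem_system x)).
rewrite block_stab_orbit cardP ?pblock_mem_system // => /(_ pr_p)[/orbit1P Kx | //].
case/negP: ntK; apply/eqP/(normal_sub_astab1_trivial (x := x) trG block_kernel_normal).
by rewrite sub_astab1.
Qed.

Lemma normal_block_kernel_orbit (Y : {group {perm T}}) x :
  Y <| K -> orbit 'P Y x = [set x] \/ orbit 'P Y x = pblock P x.
Proof.
move/(orbit_normal_prime (x := x)).
by rewrite block_kernel_orbit cardP ?pblock_mem_system //; apply.
Qed.

End NontrivialKernel.

Section PointStabilizer.

Variables (B : {set T}) (v : T).
Hypotheses (BP : B \in P) (vB : v \in B).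

Local Notation Kv := 'C_K[v | 'P].
Local Notation K0 := 'C_K(B | 'P).

Hypothesis ntK0 : K0 :!=: 1.

Lemma block_kernel_nontrivial : K :!=: 1.
Proof. by apply: contraNneq ntK0 => K1; apply/eqP/trivgP; rewrite -K1 subsetIl. Qed.

Lemma pointwise_kernel_sub_stab : K0 \subset Kv.
Proof. by rewrite setIS ?astabS ?sub1set. Qed.

Lemma card_block_kernel : #|K| = (p * #|Kv|)%N.
Proof.
rewrite -(card_orbit_stab 'P K v) block_kernel_orbit ?block_kernel_nontrivial //.
by rewrite cardP ?pblock_mem_system.
Qed.

Lemma pointwise_kernel_normal : K0 <| K.
Proof. exact: normalGI (block_kernel_sub_block_norm BP) (astab_normal _ _). Qed.

Lemma prime_dvd_pointwise_kernel : p %| #|K0|.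
Proof.
have [z /negP nfix] : exists z, ~~ (K0 \subset 'C[z | 'P]).
  apply/existsP; apply: contraR ntK0 => /existsPn fix0.
  by apply/eqP/sub_astab1_all_trivial => z; apply/negPn/fix0.
have := normal_block_kernel_orbit block_kernel_nontrivial z pointwise_kernel_normal.
case=> [/orbit1P | oz]; first by rewrite -sub_astab1.
by rewrite -(cardP (pblock_mem_system z)) -oz card_orbit dvdn_indexg.
Qed.

Section DihedralStabilizer.

Variables x y : {perm T}.
Hypotheses (defKv : <[x]> <*> <[y]> = Kv) (y2 : y ^+ 2 = 1) (xy : x ^ y = x^-1).
Hypothesis p_gt2 : 2 < p.

Lemma odd_p : odd p.
Proof. by case: (even_prime pr_p) p_gt2 => // ->. Qed.

Lemma stab_p_subgroup_unique u (X Y : {group {perm T}}) :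
  X \subset 'C_K[u | 'P] -> Y \subset 'C_K[u | 'P] -> #|X| = p -> #|Y| = p ->
  X :=: Y.
Proof.
have [g gG ->] := atransP2 trG (in_setT v) (in_setT u).
rewrite -block_kernel_stab_conj // -!sub_conjgV => sXKv sYKv oX oY.
rewrite -(conjsgKV g X) -(conjsgKV g Y); congr (_ :^ g).
apply: (dihedral_odd_subgroup_unique defKv y2 xy sXKv sYKv).
  by rewrite !cardJg oX oY.
by rewrite cardJg oX odd_p.
Qed.

Lemma exists_pointwise_prime_elt : exists2 a, a \in K0 & #[a] = p.
Proof. by have [a] := Cauchy pr_p prime_dvd_pointwise_kernel; exists a. Qed.

Section PCycle.

Variable a : {perm T}.
Hypotheses (aK0 : a \in K0) (oa : #[a] = p).

Lemma pcycle_sub_stab : <[a]> \subset Kv.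
Proof. by rewrite cycle_subG (subsetP pointwise_kernel_sub_stab). Qed.

Lemma pcycle_sub : <[a]> \subset K.
Proof. exact: subset_trans pcycle_sub_stab (subsetIl _ _). Qed.

Lemma pcycle_norm : K \subset 'N(<[a]>).
Proof.
apply/subsetP=> h hK; apply/normP.
have nK0h : K0 :^ h = K0 by apply/normP/(subsetP (normal_norm pointwise_kernel_normal)).
apply: (stab_p_subgroup_unique (u := v) (X := (<[a]> :^ h)%G)).
- by rewrite (subset_trans _ pointwise_kernel_sub_stab) // -nK0h conjSg cycle_subG.
- exact: pcycle_sub_stab.
- by rewrite cardJg -orderE oa.
- by rewrite -orderE oa.
Qed.

Lemma pelt_mem_dihedral_cycle : a \in <[x]>.
Proof.
apply: (dihedral_odd_order defKv y2 xy); last by rewrite oa odd_p.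
by rewrite -cycle_subG pcycle_sub_stab.
Qed.

(* The orbits of <b> have length at most p, so each stabiliser in <b> has a
   subgroup of order p, which must be <a>: then a would fix every point. *)
Lemma stab_order_neq_sq b : b \in Kv -> #[b] != (p * p)%N.
Proof.
move=> bKv; apply/eqP=> ob.
have pb : p.-group <[b]> by rewrite /pgroup -orderE ob pnatM pnat_id.
suff a1 : <[a]> :=: 1 by have := prime_gt1 pr_p; rewrite -oa orderE a1 cards1.
apply: sub_astab1_all_trivial => w; pose X := 'C_<[b]>[w | 'P].
have sXKv : X \subset Kv by rewrite (subset_trans (subsetIl _ _)) ?cycle_subG.
have ntX : X :!=: 1.
  apply/eqP=> X1; have := card_orbit_stab 'P <[b]> w.
  rewrite -/X X1 cards1 muln1 -orderE ob => oOb.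
  have : p * p <= p.
    rewrite -oOb -(cardP (pblock_mem_system w)) subset_leq_card // orbit_block_kernel_sub //.
    by rewrite cycle_subG (subsetP (subsetIl _ _) b bKv).
  by rewrite leqNgt ltn_Pmull ?prime_gt1 ?prime_gt0.
have [_ pX _] := pgroup_pdiv (pgroupS (subsetIl _ _) pb) ntX.
have [c cX oc] := Cauchy pr_p pX.
have eca : <[c]> :=: <[a]>.
  apply: (stab_p_subgroup_unique (u := v)); rewrite -?orderE ?oc ?oa //.
    by rewrite cycle_subG (subsetP sXKv).
  exact: pcycle_sub_stab.
by rewrite /= -eca cycle_subG (subsetP (subsetIr _ _) c cX).
Qed.

(* A Sylow p-subgroup of K_v has odd order, so it is a cyclic group of
   rotations, and it cannot have order p^2 or more. *)
Lemma coprime_pcycle_index : coprime p #|Kv : <[a]>|.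
Proof.
rewrite prime_coprime //; apply/negP=> p_dv_idx.
have ppKv : p * p %| #|Kv|.
  by rewrite -(Lagrange pcycle_sub_stab) -orderE oa dvdn_pmul2l ?prime_gt0.
have [R sylR] := Sylow_exists p Kv; have sRKv := pHall_sub sylR.
have ppR : p * p %| #|R|.
  rewrite (card_Hall sylR) -(part_pnat_id (_ : p.-nat (p * p)%N)) ?pnatM ?pnat_id //.
  by rewrite partn_dvd ?cardG_gt0.
have oddR : odd #|R|.
  by rewrite (card_Hall sylR) p_part oddX odd_p orbT.
have /cyclicP[c defR] := cyclicS (dihedral_odd_subgroup defKv y2 xy sRKv oddR) (cycle_cyclic x).
rewrite defR -orderE in ppR.
have cKv : c ^+ (#[c] %/ (p * p)) \in Kv by rewrite groupX // (subsetP sRKv) // defR cycle_id.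
have := stab_order_neq_sq cKv.
by rewrite orderXdiv ?dvdn_div // divnA // mulKn ?order_gt0 ?eqxx.
Qed.

Lemma exists_pcycle_complement :
  exists H : {group {perm T}}, <[a]> :&: H = 1 /\ <[a]> * H = Kv.
Proof.
have hallA : Hall Kv <[a]> by rewrite /Hall pcycle_sub_stab -orderE oa coprime_pcycle_index.
have nAKv : <[a]> <| Kv.
  by rewrite /normal pcycle_sub_stab (subset_trans (subsetIl _ _) pcycle_norm).
by have [H /complP[]] := splitsP (SchurZassenhaus_split hallA nAKv); exists H.
Qed.

Lemma exists_conj_moved : exists2 g, g \in G & a (g v) != g v.
Proof.
have [w /negP aw] : exists w, ~~ (<[a]> \subset 'C[w | 'P]).
  apply/existsP; apply: contraT => /existsPn fixa; have := prime_gt1 pr_p.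
  rewrite -oa orderE (sub_astab1_all_trivial (N := <[a]>%G)) ?cards1 // => w.
  exact/negPn/fixa.
have [g gG wE] := atransP2 trG (in_setT v) (in_setT w); exists g => //.
by apply/eqP=> agw; apply: aw; rewrite cycle_subG; apply/astab1P; rewrite wE.
Qed.

Section Socle.

Variable g : {perm T}.
Hypotheses (gG : g \in G) (ag : a (g v) != g v).

Local Notation Q := (<[a]> :^ g)%G.
Local Notation S := (<[a]> <*> Q)%G.

Lemma conj_pcycle_sub_stab : Q \subset 'C_K['P%act v g | 'P].
Proof. by rewrite -block_kernel_stab_conj // conjSg pcycle_sub_stab. Qed.

Lemma conj_pcycle_norm : K \subset 'N(Q).
Proof.
rewrite normJ -{1}(normsP (normal_norm block_kernel_normal) g gG) conjSg.
exact: pcycle_norm.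
Qed.

Lemma card_conj_pcycle : #|Q| = p.
Proof. by rewrite cardJg -orderE oa. Qed.

Lemma socle_dprod : <[a]> \x Q = S.
Proof.
have sQK : Q \subset K := subset_trans conj_pcycle_sub_stab (subsetIl _ _).
have tiAQ : <[a]> :&: Q = 1.
  apply: prime_TIg; first by rewrite -orderE oa.
  apply: contra ag; rewrite cycle_subG => /(subsetP conj_pcycle_sub_stab).
  by case/setIP=> _ /astab1P ah; apply/eqP.
apply: (dprodEY _ tiAQ); apply/commG1P/trivgP; rewrite -tiAQ setIC commg_subI //.
  by rewrite subsetI subxx (subset_trans sQK pcycle_norm).
by rewrite subsetI subxx (subset_trans pcycle_sub conj_pcycle_norm).
Qed.

Lemma card_socle : #|S| = (p * p)%N.
Proof. by rewrite -(dprod_card socle_dprod) -orderE oa card_conj_pcycle. Qed.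

Lemma socle_normal : S <| K.
Proof.
apply: normalY; first by rewrite /normal pcycle_sub pcycle_norm.
rewrite /normal conj_pcycle_norm andbT.
exact: subset_trans conj_pcycle_sub_stab (subsetIl _ _).
Qed.

Lemma socle_isog : S \isog setX (Zp p) (Zp p).
Proof.
apply: isog_dprod socle_dprod (setX_dprod _ _) _ _.
  by apply: isog_trans (isog_setX1 _ _); apply: isog_Zp_prime; rewrite -?orderE.
by apply: isog_trans (isog_set1X _ _); apply: isog_Zp_prime card_conj_pcycle.
Qed.

(* A subgroup of K fixing w lies in the point stabiliser K_w, which has a
   unique subgroup of order p; S has two. *)
Lemma socle_orbit w : orbit 'P S w = pblock P w.
Proof.
have [/orbit1P | //] := normal_block_kernel_orbit block_kernel_nontrivial w socle_normal.
rewrite -sub_astab1 => sSw; have /andP[sSK _] := socle_normal.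
have sSKw : S \subset 'C_K[w | 'P] by rewrite subsetI sSK.
have eAQ : <[a]> :=: Q.
  apply: (stab_p_subgroup_unique (u := w)); rewrite ?card_conj_pcycle -?orderE //.
  - exact: subset_trans (joing_subl _ _) sSKw.
  - exact: subset_trans (joing_subr _ _) sSKw.
have aQ : a \in Q by rewrite -eAQ cycle_id.
have /setIP[_ /astab1P agv] := subsetP conj_pcycle_sub_stab a aQ.
by exfalso; move/eqP: ag; apply.
Qed.

Section Complement.

Variable H : {group {perm T}}.
Hypotheses (tiAH : <[a]> :&: H = 1) (defAH : <[a]> * H = Kv).

Lemma complement_sub_stab : H \subset Kv.
Proof. by rewrite -defAH mulG_subr. Qed.

Lemma complement_sub : H \subset K.
Proof. exact: subset_trans complement_sub_stab (subsetIl _ _). Qed.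

Lemma card_stab_complement : #|Kv| = (p * #|H|)%N.
Proof. by rewrite -defAH TI_cardMg // -orderE oa. Qed.

Lemma coprime_complement : coprime p #|H|.
Proof.
have := coprime_pcycle_index; congr (coprime p _).
apply/eqP; rewrite -(eqn_pmul2l (prime_gt0 pr_p)) -card_stab_complement.
by rewrite -(Lagrange pcycle_sub_stab) -orderE oa.
Qed.

Lemma socle_sdprod : S ><| H = K.
Proof.
have tiSH : S :&: H = 1 by rewrite coprime_TIg // card_socle coprimeMl coprime_complement.
have /andP[sSK nSK] := socle_normal.
rewrite sdprodE ?(subset_trans complement_sub nSK) //; apply/eqP.
rewrite eqEcard mul_subG ?complement_sub //= TI_cardMg // card_socle.
by rewrite card_block_kernel card_stab_complement mulnA.
Qed.

(* An element c of H centralising S has <c> normal in <c>S, which is transitive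
   on each block; so the <c>-orbits have size dividing both p and |H|. *)
Lemma complement_cent_socle c : c \in H -> c \in 'C(S) -> c = 1.
Proof.
move=> cH cS; apply/permP=> w; rewrite perm1.
have cK : c \in K := subsetP complement_sub c cH.
pose L := (<[c]> <*> S)%G.
have nCL : <[c]> <| L.
  rewrite /normal joing_subl join_subG /= normG (subset_trans _ (cent_sub _)) //.
  by rewrite centsC cycle_subG.
have oL : orbit 'P L w = pblock P w.
  apply/eqP; rewrite eqEsubset -{2}socle_orbit imsetS ?joing_subr // andbT.
  by rewrite orbit_block_kernel_sub // join_subG cycle_subG cK (normal_sub socle_normal).
have dv_p := card_orbit_normal_dvd w nCL; rewrite oL (cardP (pblock_mem_system w)) in dv_p.
have dv_H : #|orbit 'P <[c]> w| %| #|H|.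
  by rewrite card_orbit (dvdn_trans (dvdn_indexg _ _)) ?cardSg ?cycle_subG.
have /card_orbit1 ow : #|orbit 'P <[c]> w| = 1%N.
  by apply/eqP; rewrite -dvdn1 -(eqnP coprime_complement) dvdn_gcd dv_p dv_H.
by have := mem_orbit 'P w (cycle_id c); rewrite ow => /set1P.
Qed.

Lemma complement_abelian : abelian H.
Proof.
apply/centsP=> h1 h1H h2 h2H; apply/commgP/eqP/complement_cent_socle; first by rewrite groupR.
have nK1 := subsetP complement_sub h1 h1H; have nK2 := subsetP complement_sub h2 h2H.
rewrite centY inE; apply/andP; split; apply: commg_cyclic_cent.
- exact: cycle_cyclic.
- exact: subsetP pcycle_norm _ nK1.
- exact: subsetP pcycle_norm _ nK2.
- by rewrite cyclicJ cycle_cyclic.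
- exact: subsetP conj_pcycle_norm _ nK1.
- exact: subsetP conj_pcycle_norm _ nK2.
Qed.

Lemma exists_complement_reflection : exists2 r, r \in H & r \notin <[x]>.
Proof.
apply/subsetPn/negP=> sHx.
have sKvx : Kv \subset <[x]> by rewrite -defAH mul_subG ?cycle_subG ?pelt_mem_dihedral_cycle.
have a_gt2 : 2 < #[a] by rewrite oa.
have /negP[] := dihedral_reflection_notin_cycle xy pelt_mem_dihedral_cycle a_gt2.
by rewrite (subsetP sKvx) // -defKv mem_gen // inE cycle_id orbT.
Qed.

Lemma complement_exponent2 : {in H, forall h, h ^+ 2 = 1}.
Proof.
have [r rH rx] := exists_complement_reflection.
move=> h; apply: (dihedral_abelian_exponent2 defKv y2 xy) rH rx => //.
  exact: complement_sub_stab.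
exact: complement_abelian.
Qed.

Lemma card_complement : #|H| = 2 \/ #|H| = 4.
Proof.
have [r rH rx] := exists_complement_reflection.
have ntr : r != 1 by apply: contraNneq rx => ->; apply: group1.
have H_even : 2 %| #|H|.
  by rewrite -(nt_prime_order (isT : prime 2) (complement_exponent2 rH) ntr) order_dvdG.
have := dihedral_exponent2_card defKv y2 xy complement_sub_stab complement_exponent2.
by move: H_even (cardG_gt0 H); case: #|H| => [|[|[|[|[|]]]]]; auto.
Qed.

Lemma complement_isog : H \isog Zp 2 \/ dihedral_of_order H 2.
Proof.
case: card_complement => oH; first by left; apply: isog_Zp_prime oH.
by right; apply: card4_exponent2_dihedral oH complement_exponent2.
Qed.

End Complement.

Lemma socle_sdprod_structure :
  exists N H : {group {perm T}},
    [/\ N ><| H = K, N \isog setX (Zp p) (Zp p)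
      & H \isog Zp 2 \/ dihedral_of_order H 2].
Proof.
have [H [tiAH defAH]] := exists_pcycle_complement.
by exists S, H; split; [apply: socle_sdprod | apply: socle_isog | apply: complement_isog].
Qed.

End Socle.

End PCycle.

Lemma block_kernel_sdprod_structure :
  exists N H : {group {perm T}},
    [/\ N ><| H = K, N \isog setX (Zp p) (Zp p)
      & H \isog Zp 2 \/ dihedral_of_order H 2].
Proof.
have [a aK0 oa] := exists_pointwise_prime_elt.
have [g gG ag] := exists_conj_moved oa.
exact: (socle_sdprod_structure aK0 oa gG ag).
Qed.

End DihedralStabilizer.

End PointStabilizer.

End BlockKernel.

Local Close Scope group_scope.

Theorem mainTheorem11
  (p n m : nat) (Omega : finType) (G : {group {perm Omega}})
  (P : {set {set Omega}}) (B : {set Omega}) (v : Omega) :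
  prime p -> 3 <= p ->
  #|Omega| = p ^ 2 ->
  [transitive G, on [set: Omega] | 'P] ->
  2 <= n ->
  (forall w : Omega, dihedral_of_order ('C_G[w | 'P])%g n) ->
  block_system G P ->
  (forall C, C \in P -> #|C| = p) ->
  B \in P -> v \in B ->
  let K := ('C_G(P | 'P^*))%g in
  let Kv := ('C_K[v | 'P])%g in
  let K0 := ('C_K(B | 'P))%g in
  K0 != 1%g ->
  dihedral_of_order Kv m ->
  (m = n \/ 2 * m = n) ->
  exists N H : {group {perm Omega}},
    [/\ (N ><| H = K)%g,
        (N \isog setX (Zp p) (Zp p))%g
      & (H \isog Zp 2)%g \/ dihedral_of_order H 2].
Proof.
move=> pr_p p_gt2 _ trG _ _ sysP cardP BP vB K Kv K0 ntK0 dihKv _.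
have /existsP[[x y] /=] := isoGrp_hom (G := ('C_K[v | 'P])%G) dihKv.
rewrite !xpair_eqE => /and4P[/eqP defKv _ /eqP y2 /eqP xy].
exact: (block_kernel_sdprod_structure pr_p trG sysP cardP BP vB ntK0 defKv y2 xy p_gt2).
Qed.
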